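(* Let $\Lambda$ be a Kähler group, let $\rho:\Lambda\to\prod_{\alpha\in\mathfrak{U}}T_\alpha$ be its universal homomorphism, and let $\rho_{\mathrm{tf}}$ be its torsion-free universal homomorphism. Then $\ker(\rho)$ and $\ker(\rho_{\mathrm{tf}})$ are characteristic subgroups of $\Lambda$.
   Context: A Kähler group is the fundamental group of a compact Kähler manifold. For a Kähler group $\Lambda$ there is a (possibly empty) finite collection of cocompact Fuchsian groups $\{T_\alpha\}_{\alpha\in\mathfrak{U}}$ and a homomorphism $\rho:\Lambda\to T=\prod_{\alpha\in\mathfrak{U}}T_\alpha$ (the universal homomorphism; the $T_\alpha$ are its direct factors) such that: (1) for each $\alpha$, with projection $p_\alpha:T\to T_\alpha$, the map $p_\alpha\circ\rho$ is surjective; (2) every surjective homomorphism from $\Lambda$ onto a cocompact Fuchsian group factors through some $p_\alpha\circ\rho$; (3) a surjective homomorphism $\sigma:\Lambda\to T'$ onto a cocompact Fuchsian group has finitely generated kernel if and only if there exist $\alpha\in\mathfrak{U}$ and an isomorphism $\psi:T_\alpha\to T'$ with $\sigma=\psi\circ p_\alpha\circ\rho$. (If $\mathfrak{U}=\varnothing$, $\rho$ is the trivial map to the trivial group.) Let $\mathfrak{U}_{\mathrm{tf}}\subseteq\mathfrak{U}$ be the set of $\alpha$ for which $T_\alpha$ is torsion-free (i.e., a surface group of genus $\ge2$); the torsion-free universal homomorphism is $\rho_{\mathrm{tf}}:\Lambda\to\prod_{\alpha\in\mathfrak{U}_{\mathrm{tf}}}T_\alpha$, the composition of $\rho$ with the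 projection onto these factors. *)

From Stdlib Require Import Reals List.
Open Scope R_scope.

Record Group := {
  carrier :> Type;
  gmul : carrier -> carrier -> carrier;
  gone : carrier;
  ginv : carrier -> carrier;
  gmulA : forall x y z, gmul x (gmul y z) = gmul (gmul x y) z;
  gmul1l : forall x, gmul gone x = x;
  gmul1r : forall x, gmul x gone = x;
  gmulVl : forall x, gmul (ginv x) x = gone;
  gmulVr : forall x, gmul x (ginv x) = gone
}.

Arguments gmul {g}.
Arguments gone {g}.
Arguments ginv {g}.

Definition is_hom (G H : Group) (f : G -> H) : Prop :=
  forall x y, f (gmul x y) = gmul (f x) (f y).

Definition surjective {A B : Type} (f : A -> B) : Prop :=
  forall b, exists a, f a = b.

Definition bijective {A B : Type} (f : A -> B) : Prop :=
  (forall x y, f x = f y -> x = y) /\ surjective f.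

Definition is_iso (G H : Group) (f : G -> H) : Prop :=
  is_hom G H f /\ bijective f.

Definition kernel (G H : Group) (f : G -> H) : G -> Prop :=
  fun x => f x = gone.

Inductive gen (G : Group) (l : list G) : G -> Prop :=
  | gen_in : forall x, In x l -> gen G l x
  | gen_one : gen G l gone
  | gen_mul : forall x y, gen G l x -> gen G l y -> gen G l (gmul x y)
  | gen_inv : forall x, gen G l x -> gen G l (ginv x).

Definition fin_gen_subgroup (G : Group) (K : G -> Prop) : Prop :=
  exists l : list G, (forall x, In x l -> K x) /\ (forall x, K x <-> gen G l x).

Fixpoint gpow (G : Group) (x : G) (n : nat) : G :=
  match n with O => gone | S m => gmul x (gpow G x m) end.

Definition torsion_free (G : Group) : Prop :=
  forall (x : G) (n : nat), (n >= 1)%nat -> gpow G x n = gone -> x = gone.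

Definition characteristic (G : Group) (K : G -> Prop) : Prop :=
  forall phi : G -> G, is_iso G G phi -> forall x, K x <-> K (phi x).

Section Prod.
Variable I : Type.
Variable T : I -> Group.
Definition pmul (x y : forall i, T i) : forall i, T i := fun i => gmul (x i) (y i).
Definition pone : forall i, T i := fun i => gone.
Definition pinv (x : forall i, T i) : forall i, T i := fun i => ginv (x i).
End Prod.

From Stdlib Require Import FunctionalExtensionality.

Definition prodGroup (I : Type) (T : I -> Group) : Group.
Proof.
  refine {| carrier := forall i, T i; gmul := pmul I T; gone := pone I T;
            ginv := pinv I T |};
  intros; unfold pmul, pone, pinv; apply functional_extensionality_dep; intro i.
  - apply gmulA. - apply gmul1l. - apply gmul1r. - apply gmulVl. - apply gmulVr.
Defined.

Definition proj (I : Type) (T : I -> Group) (a : I) : prodGroup I T -> T a :=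
  fun x => x a.

Record mat2 := Mat2 { m11 : R; m12 : R; m21 : R; m22 : R }.

Definition mmul (A B : mat2) : mat2 :=
  Mat2 (m11 A * m11 B + m12 A * m21 B) (m11 A * m12 B + m12 A * m22 B)
       (m21 A * m11 B + m22 A * m21 B) (m21 A * m12 B + m22 A * m22 B).
Definition mopp (A : mat2) : mat2 := Mat2 (- m11 A) (- m12 A) (- m21 A) (- m22 A).
Definition mid : mat2 := Mat2 1 0 0 1.
Definition mdet (A : mat2) : R := m11 A * m22 A - m12 A * m21 A.
Definition mdist (A B : mat2) : R :=
  Rmax (Rmax (Rabs (m11 A - m11 B)) (Rabs (m12 A - m12 B)))
       (Rmax (Rabs (m21 A - m21 B)) (Rabs (m22 A - m22 B))).
Definition mnorm (A : mat2) : R :=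
  Rmax (Rmax (Rabs (m11 A)) (Rabs (m12 A))) (Rmax (Rabs (m21 A)) (Rabs (m22 A))).

(* f : G -> SL(2,R) induces an injective homomorphism G -> PSL(2,R) = SL(2,R)/{±1} *)
Definition psl_embedding (G : Group) (f : G -> mat2) : Prop :=
  (forall x, mdet (f x) = 1) /\
  (forall x y, f (gmul x y) = mmul (f x) (f y) \/ f (gmul x y) = mopp (mmul (f x) (f y))) /\
  (forall x, (f x = mid \/ f x = mopp mid) -> x = gone).

(* image is discrete in PSL(2,R): the identity class {±I} is isolated *)
Definition psl_discrete (G : Group) (f : G -> mat2) : Prop :=
  exists eps, 0 < eps /\
    forall x, x <> gone -> eps <= mdist (f x) mid /\ eps <= mdist (f x) (mopp mid).

(* image is cocompact: PSL(2,R) = Gamma K for a compact (equivalently, bounded,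
   since SL(2,R) is closed in M_2(R)) subset K of SL(2,R) *)
Definition psl_cocompact (G : Group) (f : G -> mat2) : Prop :=
  exists B, forall M : mat2, mdet M = 1 ->
    exists (x : G) (K : mat2), mdet K = 1 /\ mnorm K <= B /\
      (M = mmul (f x) K \/ M = mopp (mmul (f x) K)).

Definition cocompact_fuchsian (G : Group) : Prop :=
  exists f : G -> mat2, psl_embedding G f /\ psl_discrete G f /\ psl_cocompact G f.

Definition finite_type (I : Type) : Prop := exists l : list I, forall i, In i l.

Definition universal_hom (L : Group) (I : Type) (T : I -> Group)
    (rho : L -> prodGroup I T) : Prop :=
  finite_type I /\
  (forall a, cocompact_fuchsian (T a)) /\
  is_hom L (prodGroup I T) rho /\
  (* (1) *)
  (forall a, surjective (fun x => proj I T a (rho x))) /\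
  (* (2) *)
  (forall (T' : Group) (sigma : L -> T'), cocompact_fuchsian T' ->
     is_hom L T' sigma -> surjective sigma ->
     exists a (theta : T a -> T'), is_hom (T a) T' theta /\
       forall x, sigma x = theta (proj I T a (rho x))) /\
  (* (3) *)
  (forall (T' : Group) (sigma : L -> T'), cocompact_fuchsian T' ->
     is_hom L T' sigma -> surjective sigma ->
     (fin_gen_subgroup L (kernel L T' sigma) <->
      exists a (psi : T a -> T'), is_iso (T a) T' psi /\
        forall x, sigma x = psi (proj I T a (rho x)))).

Definition tf_index (I : Type) (T : I -> Group) : Type :=
  { a : I | torsion_free (T a) }.

Definition tf_family (I : Type) (T : I -> Group) : tf_index I T -> Group :=
  fun a => T (proj1_sig a).

Definition rho_tf (L : Group) (I : Type) (T : I -> Group) (rho : L -> prodGroup I T) :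
  L -> prodGroup (tf_index I T) (tf_family I T) :=
  fun x => fun a => rho x (proj1_sig a).

From Stdlib Require Import List FunctionalExtensionality IndefiniteDescription.

(* An automorphism [phi] of [L] turns every factor [x |-> rho x a] of the
   universal homomorphism into another surjection [x |-> rho (phi x) a] onto a
   cocompact Fuchsian group.  By property (2) it factors through [rho], so
   [ker rho] is [phi]-stable.  If [T a] is torsion-free, the kernel of
   [x |-> rho x a] is finitely generated by (3), hence so is its preimage under
   [phi]; by (3) again, [x |-> rho (phi x) a] is then a factor [T b] of [rho]
   composed with an isomorphism, so [T b] is torsion-free too and
   [ker rho_tf] is [phi]-stable.  Applying this to [phi^-1] gives equality. *)

Lemma hom_gone (G H : Group) (f : G -> H) : is_hom G H f -> f gone = gone.
Proof.
  intro Hf.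
  assert (e : gmul (f gone) (f gone) = f gone) by (rewrite <- Hf, gmul1l; reflexivity).
  rewrite <- (gmul1l _ (f gone)), <- (gmulVl _ (f gone)), <- gmulA, e.
  reflexivity.
Qed.

Lemma hom_ginv (G H : Group) (f : G -> H) :
  is_hom G H f -> forall x, f (ginv x) = ginv (f x).
Proof.
  intros Hf x.
  assert (e : gmul (f (ginv x)) (f x) = gone).
  { rewrite <- Hf, gmulVl. exact (hom_gone G H f Hf). }
  rewrite <- (gmul1r _ (f (ginv x))), <- (gmulVr _ (f x)), gmulA, e, gmul1l.
  reflexivity.
Qed.

Lemma hom_gpow (G H : Group) (f : G -> H) :
  is_hom G H f -> forall x n, f (gpow G x n) = gpow H (f x) n.
Proof.
  intros Hf x n; induction n as [|n IHn]; simpl.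
  - exact (hom_gone G H f Hf).
  - rewrite Hf, IHn; reflexivity.
Qed.

Lemma is_hom_comp (G H K : Group) (f : G -> H) (g : H -> K) :
  is_hom G H f -> is_hom H K g -> is_hom G K (fun x => g (f x)).
Proof. intros Hf Hg x y; rewrite Hf, Hg; reflexivity. Qed.

Lemma is_hom_proj (I : Type) (T : I -> Group) (a : I) :
  is_hom (prodGroup I T) (T a) (proj I T a).
Proof. intros x y; reflexivity. Qed.

Lemma is_iso_id (G : Group) : is_iso G G (fun x => x).
Proof.
  split; [intros x y; reflexivity |].
  split; [intros x y e; exact e | intro y; exists y; reflexivity].
Qed.

Lemma iso_inverse (G H : Group) (f : G -> H) :
  is_iso G H f ->
  exists g : H -> G, is_iso H G g /\ (forall x, g (f x) = x) /\ (forall y, f (g y) = y).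
Proof.
  intros [Hf [Hinj Hsurj]].
  destruct (functional_choice (fun y x => f x = y) Hsurj) as [g fgK].
  assert (gfK : forall x, g (f x) = x) by (intro x; apply Hinj, fgK).
  exists g; repeat split; try assumption.
  - intros y z; apply Hinj; rewrite Hf, !fgK; reflexivity.
  - intros y z e; rewrite <- (fgK y), <- (fgK z), e; reflexivity.
  - intro x; exists (f x); apply gfK.
Qed.

Lemma torsion_free_iso (G H : Group) (f : G -> H) :
  is_iso G H f -> torsion_free H -> torsion_free G.
Proof.
  intros [Hf [Hinj _]] Htf x n Hn Hx.
  apply Hinj; rewrite (hom_gone G H f Hf).
  apply (Htf _ n Hn); rewrite <- (hom_gpow G H f Hf), Hx.
  exact (hom_gone G H f Hf).
Qed.

Lemma characteristic_of_aut_stable (G : Group) (K : G -> Prop) :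
  (forall phi, is_iso G G phi -> forall x, K x -> K (phi x)) -> characteristic G K.
Proof.
  intros Hstable phi Hphi x; split; [apply Hstable, Hphi |].
  destruct (iso_inverse G G phi Hphi) as [psi [Hpsi [psiK _]]].
  intro Hx; rewrite <- (psiK x); exact (Hstable psi Hpsi _ Hx).
Qed.

Lemma gen_hom_image (G H : Group) (f : G -> H) (l : list G) (x : G) :
  is_hom G H f -> gen G l x -> gen H (map f l) (f x).
Proof.
  intros Hf Hx; induction Hx as [x Hx | | x y _ IHx _ IHy | x _ IHx].
  - apply gen_in, in_map, Hx.
  - rewrite (hom_gone G H f Hf); apply gen_one.
  - rewrite Hf; apply gen_mul; assumption.
  - rewrite (hom_ginv G H f Hf x); apply gen_inv; assumption.
Qed.

Lemma fin_gen_subgroup_preimage_iso (G H : Group) (f : G -> H) (K : H -> Prop) :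
  is_iso G H f -> fin_gen_subgroup H K -> fin_gen_subgroup G (fun x => K (f x)).
Proof.
  intros Hiso [l [HlK HK]].
  destruct (iso_inverse G H f Hiso) as [g [[Hg _] [gfK fgK]]].
  assert (fgl : map f (map g l) = l).
  { rewrite map_map, (map_ext _ (fun y => y) fgK); apply map_id. }
  exists (map g l); split.
  - intros x Hx; apply in_map_iff in Hx as [y [<- Hy]].
    rewrite fgK; apply HlK, Hy.
  - intro x; split.
    + intro Hx; rewrite <- (gfK x); apply gen_hom_image, HK; assumption.
    + intro Hx; apply HK; rewrite <- fgl; apply gen_hom_image, Hx.
      exact (proj1 Hiso).
Qed.

Section UniversalHom.

Variables (L : Group) (I : Type) (T : I -> Group) (rho : L -> prodGroup I T).
Hypothesis Hrho : universal_hom L I T rho.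

Lemma universal_factor_comp_aut (phi : L -> L) (a : I) :
  is_iso L L phi ->
  cocompact_fuchsian (T a) /\ is_hom L (T a) (fun x => proj I T a (rho (phi x))) /\
  surjective (fun x => proj I T a (rho (phi x))).
Proof.
  destruct Hrho as (_ & Hfuchs & Hhom & Hsurj & _).
  intros [Hphi [_ Hphi_surj]]; split; [apply Hfuchs | split].
  - apply (is_hom_comp _ _ _ phi (fun y => proj I T a (rho y))); [exact Hphi |].
    apply (is_hom_comp _ _ _ rho); [exact Hhom | apply is_hom_proj].
  - intro t; destruct (Hsurj a t) as [y Hy], (Hphi_surj y) as [x <-].
    exists x; exact Hy.
Qed.

Lemma universal_factor_fin_gen_kernel (a : I) :
  fin_gen_subgroup L (kernel L (T a) (fun x => proj I T a (rho x))).
Proof.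
  destruct Hrho as (_ & _ & _ & _ & _ & Hfg).
  destruct (universal_factor_comp_aut (fun x => x) a (is_iso_id L)) as (Hfuchs & Hhom & Hsurj).
  apply (Hfg _ _ Hfuchs Hhom Hsurj).
  exists a, (fun t => t); split; [apply is_iso_id | reflexivity].
Qed.

Lemma kernel_universal_aut_stable (phi : L -> L) :
  is_iso L L phi ->
  forall x, kernel L _ rho x -> kernel L _ rho (phi x).
Proof.
  intros Hphi x Hx; unfold kernel in *.
  apply functional_extensionality_dep; intro a.
  destruct Hrho as (_ & _ & _ & _ & Hfactor & _).
  destruct (universal_factor_comp_aut phi a Hphi) as (Hfuchs & Hhom & Hsurj).
  destruct (Hfactor _ _ Hfuchs Hhom Hsurj) as [b [theta [Htheta Heq]]].
  change (rho (phi x) a) with (proj I T a (rho (phi x))).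
  rewrite Heq; unfold proj; rewrite Hx.
  exact (hom_gone _ _ theta Htheta).
Qed.

Lemma torsion_free_factor_comp_aut (phi : L -> L) (a : I) :
  is_iso L L phi -> torsion_free (T a) ->
  exists b (psi : T b -> T a), torsion_free (T b) /\ is_hom (T b) (T a) psi /\
    forall x, rho (phi x) a = psi (rho x b).
Proof.
  intros Hphi Htf.
  destruct Hrho as (_ & _ & _ & _ & _ & Hfg).
  destruct (universal_factor_comp_aut phi a Hphi) as (Hfuchs & Hhom & Hsurj).
  destruct (proj1 (Hfg _ _ Hfuchs Hhom Hsurj)) as [b [psi [Hpsi Heq]]].
  - exact (fin_gen_subgroup_preimage_iso L L phi _ Hphi
             (universal_factor_fin_gen_kernel a)).
  - exists b, psi; split; [exact (torsion_free_iso _ _ psi Hpsi Htf) |].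
    split; [exact (proj1 Hpsi) | exact Heq].
Qed.

Lemma kernel_universal_tf_aut_stable (phi : L -> L) :
  is_iso L L phi ->
  forall x, kernel L _ (rho_tf L I T rho) x -> kernel L _ (rho_tf L I T rho) (phi x).
Proof.
  intros Hphi x Hx; unfold kernel, rho_tf in *.
  apply functional_extensionality_dep; intros [a Htf]; simpl.
  destruct (torsion_free_factor_comp_aut phi a Hphi Htf)
    as [b [psi [Htf_b [Hpsi Heq]]]].
  pose proof (equal_f_dep Hx (exist _ b Htf_b)) as Hxb; simpl in Hxb.
  rewrite Heq, Hxb.
  exact (hom_gone _ _ psi Hpsi).
Qed.

End UniversalHom.

Theorem lemma2p2 (L : Group) (I : Type) (T : I -> Group) (rho : L -> prodGroup I T) :
  universal_hom L I T rho ->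
  characteristic L (kernel L (prodGroup I T) rho) /\
  characteristic L (kernel L (prodGroup (tf_index I T) (tf_family I T)) (rho_tf L I T rho)).
Proof.
  intro Hrho; split; apply characteristic_of_aut_stable.
  - exact (kernel_universal_aut_stable L I T rho Hrho).
  - exact (kernel_universal_tf_aut_stable L I T rho Hrho).
Qed.
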